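(* Let $G$ be a finite group of order $n$, let $f:G\to\mathbb{Q}$ be a class function with $f(g)=f(g^{-1})$ for all $g\in G$, and let $\Gamma_f=\operatorname{Cay}(G,f)$ be the Cayley colour graph. Let $K$ be a field with $\mathbb{Q}\subseteq K\subseteq\mathbb{Q}(\zeta_n)$ and $H_K=\eta(\operatorname{Gal}(\mathbb{Q}(\zeta_n)/K))\le\mathbb{Z}_n^*$. Then all eigenvalues of $\Gamma_f$ lie in $K$ if and only if $f^h=f$ for all $h\in H_K$.
   Context: $\zeta_n=e^{2\pi i/n}$; $\mathbb{Z}_n^*$ is the unit group of $\mathbb{Z}/n\mathbb{Z}$; $\eta:\operatorname{Gal}(\mathbb{Q}(\zeta_n)/\mathbb{Q})\to\mathbb{Z}_n^*$ is the isomorphism with $\sigma(\zeta_n)=\zeta_n^{\eta(\sigma)}$. A class function is a function constant on conjugacy classes. For $h\in\mathbb{Z}_n^*$, $f^h:G\to\mathbb{C}$ is $f^h(g)=f(g^h)$. The Cayley colour graph $\Gamma_f=\operatorname{Cay}(G,f)$ has vertex set $G$ and adjacency matrix $A(\Gamma_f)=[f(gh^{-1})]_{g,h\in G}$ (a real symmetric matrix); the eigenvalues of $\Gamma_f$ are the eigenvalues of this matrix. *)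

From HB Require Import structures.
From mathcomp Require Import all_boot all_order all_algebra all_fingroup all_field.
Set Implicit Arguments. Unset Strict Implicit. Unset Printing Implicit Defensive.
Import GRing.Theory Num.Theory.
Local Open Scope ring_scope.

(* Complex numbers are modelled by algC (algebraic closure of Q inside C);
   all eigenvalues of a rational matrix are algebraic, so nothing is lost. *)

Definition in_Qz (z x : algC) : Prop :=
  exists p : {poly rat}, x = (map_poly ratr p).[z].

Definition is_subfield (K : algC -> Prop) : Prop :=
  [/\ K 0, K 1,
      (forall x y, K x -> K y -> K (x - y)),
      (forall x y, K x -> K y -> K (x * y)) &
      (forall x, K x -> x != 0 -> K x^-1)].

Definition Qz_aut (z : algC) (s : algC -> algC) : Prop :=
  [/\ (forall x, in_Qz z x -> in_Qz z (s x)),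
      (forall y, in_Qz z y -> exists2 x, in_Qz z x & s x = y),
      (forall x y, in_Qz z x -> in_Qz z y -> s (x + y) = s x + s y),
      (forall x y, in_Qz z x -> in_Qz z y -> s (x * y) = s x * s y) &
      s 1 = 1].

Definition in_Gal (z : algC) (K : algC -> Prop) (s : algC -> algC) : Prop :=
  Qz_aut z s /\ (forall x, K x -> s x = x).

(* h (a representative of a class in Z_n^* ) lies in H_K = eta(Gal(Q(z)/K)) *)
Definition in_HK (n : nat) (z : algC) (K : algC -> Prop) (h : nat) : Prop :=
  coprime h n /\ exists s, in_Gal z K s /\ s z = z ^+ h.

Definition cayley_adj (gT : finGroupType) (f : gT -> rat) : 'M[algC]_#|gT| :=
  \matrix_(i, j) ratr (f (enum_val i * (enum_val j)^-1)%g).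

From Stdlib Require Import Classical_Prop.
From HB Require Import structures.
From mathcomp Require Import all_boot all_order all_algebra all_fingroup all_solvable all_field all_character.
From mathcomp Require Import zify ring.
Import GRing.Theory Num.Theory.
Set Implicit Arguments. Unset Strict Implicit. Unset Printing Implicit Defensive.
Local Open Scope ring_scope.

(* The adjacency matrix of Cay(G, f) is the matrix of convolution by the class
   function f. It acts on (the matrix of) each irreducible character chi as the
   scalar lambda_chi(f) = |G| [f, chi] / chi(1); these scalars are all its
   eigenvalues, and they determine f. An automorphism of Q(zeta_n) sending
   zeta_n to zeta_n^h maps chi(x) to chi(x^h), hence lambda_chi(f) to
   lambda_chi(f^h'), where h' is the inverse of h modulo n. So it fixes every
   eigenvalue iff f^h = f, and the theorem follows from the Galois
   correspondence: an element of Q(zeta_n) lies in K iff Gal(Q(zeta_n)/K)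
   fixes it. *)

Section Subfield.

Variable K : algC -> Prop.
Hypothesis subK : is_subfield K.

Lemma subfield0 : K 0. Proof. by case: subK. Qed.

Lemma subfield1 : K 1. Proof. by case: subK. Qed.

Lemma subfieldB x y : K x -> K y -> K (x - y).
Proof. by case: subK => _ _ KB _ _; apply: KB. Qed.

Lemma subfieldM x y : K x -> K y -> K (x * y).
Proof. by case: subK => _ _ _ KM _; apply: KM. Qed.

Lemma subfieldV x : K x -> K x^-1.
Proof.
case: subK => _ _ _ _ KV Kx; have [->|x_neq0] := eqVneq x 0; last exact: KV.
by rewrite invr0; apply: subfield0.
Qed.

Lemma subfieldN x : K x -> K (- x).
Proof. by move=> Kx; rewrite -sub0r; apply: subfieldB Kx; apply: subfield0. Qed.

Lemma subfieldD x y : K x -> K y -> K (x + y).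
Proof. by move=> Kx Ky; rewrite -(opprK y); apply: subfieldB Kx (subfieldN Ky). Qed.

Lemma subfield_nat m : K m%:R.
Proof.
elim: m => [|m IHm]; first exact: subfield0.
by rewrite -addn1 natrD; apply: subfieldD IHm subfield1.
Qed.

Lemma subfield_int (m : int) : K m%:~R.
Proof.
case: m => m; first exact: subfield_nat.
by rewrite NegzE mulrNz; apply/subfieldN/subfield_nat.
Qed.

Lemma subfield_rat c : K (ratr c).
Proof. exact: subfieldM (subfield_int _) (subfieldV (subfield_int _)). Qed.

Lemma subfield_sum I r (P : pred I) (F : I -> algC) :
  (forall i, P i -> K (F i)) -> K (\sum_(i <- r | P i) F i).
Proof. by move=> KF; apply: big_ind => //; [apply: subfield0 | apply: subfieldD]. Qed.

End Subfield.

Lemma rmorph_horner_rat (u : {rmorphism algC -> algC}) (p : {poly rat}) x :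
  u (map_poly ratr p).[x] = (map_poly ratr p).[u x].
Proof.
rewrite -horner_map -map_poly_comp; congr _.[_].
by apply: eq_map_poly => c /=; apply: fmorph_rat.
Qed.

Section GeneratedField.

Variable z : algC.

Lemma in_Qz_rat c : in_Qz z (ratr c).
Proof. by exists c%:P; rewrite map_polyC hornerC. Qed.

Lemma in_Qz0 : in_Qz z 0.
Proof. by rewrite -(rmorph0 ratr); apply: in_Qz_rat. Qed.

Lemma in_Qz_zX k : in_Qz z (z ^+ k).
Proof. by exists 'X^k; rewrite map_polyXn hornerXn. Qed.

Lemma in_QzD x y : in_Qz z x -> in_Qz z y -> in_Qz z (x + y).
Proof. by move=> [p ->] [q ->]; exists (p + q); rewrite rmorphD hornerD. Qed.

Lemma in_QzM x y : in_Qz z x -> in_Qz z y -> in_Qz z (x * y).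
Proof. by move=> [p ->] [q ->]; exists (p * q); rewrite rmorphM hornerM. Qed.

Lemma in_Qz_sum I r (P : pred I) (F : I -> algC) :
  (forall i, P i -> in_Qz z (F i)) -> in_Qz z (\sum_(i <- r | P i) F i).
Proof. by move=> QF; apply: big_ind => //; [apply: in_Qz0 | apply: in_QzD]. Qed.

Lemma in_Qz_horner (q : {poly rat}) y : in_Qz z y -> in_Qz z (map_poly ratr q).[y].
Proof. by case=> p ->; exists (q \Po p); rewrite map_comp_poly horner_comp. Qed.

Variable K : algC -> Prop.
Hypothesis subK : is_subfield K.

Lemma in_Gal_horner s (p : {poly rat}) : in_Gal z K s ->
  s (map_poly ratr p).[z] = (map_poly ratr p).[s z].
Proof.
case=> [[_ _ sD sM _] sK].
elim/poly_ind: p => [|p c IHp].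
  by rewrite rmorph0 !horner0; apply: sK; apply: subfield0.
have Qp : in_Qz z (map_poly ratr p).[z] by exists p.
have Qz : in_Qz z z by rewrite -[z]expr1; apply: in_Qz_zX.
rewrite rmorphD rmorphM /= map_polyX map_polyC !hornerD !hornerMX !hornerC.
rewrite (sD _ _ (in_QzM Qp Qz) (in_Qz_rat c)) (sM _ _ Qp Qz) IHp.
by rewrite (sK _ (subfield_rat subK c)).
Qed.

(* A Galois element is determined by its value on the generator z. *)
Lemma in_Gal_eq_aut n k s (u : {rmorphism algC -> algC}) :
    (forall y, y ^+ n = 1 -> u y = y ^+ k) -> z ^+ n = 1 ->
    in_Gal z K s -> s z = z ^+ k ->
  forall x, in_Qz z x -> s x = u x.
Proof.
move=> uX zn1 sGal sz x [p ->].
by rewrite in_Gal_horner // rmorph_horner_rat sz uX.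
Qed.

End GeneratedField.

Lemma exists_span_pred (F : fieldType) (vT : vectType F) (P : vT -> Prop) :
  exists2 s : seq vT, (forall v, v \in s -> P v) & (forall v, P v -> v \in <<s>>%VS).
Proof.
suff: forall m (s : seq vT), (\dim {:vT} - \dim <<s>> <= m)%N ->
    (forall v, v \in s -> P v) ->
  exists2 s' : seq vT, (forall v, v \in s' -> P v) & (forall v, P v -> v \in <<s'>>%VS).
  by move/(_ _ [::] (leqnn _)); apply.
elim=> [|m IHm] s dim_s sP;
  (have [[v [Pv s'v]]|no_new] := classic (exists v, P v /\ v \notin <<s>>%VS));
  try by exists s => // v Pv; apply/negPn/negP => s'v; apply: no_new; exists v.
- suff /eqP s_full : (<<s>> == fullv)%VS by rewrite s_full memvf in s'v.
  by rewrite eqEdim subvf /= -subn_eq0 -leqn0.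
- apply: (IHm (v :: s)); last by move=> y; rewrite inE => /predU1P[->|/sP].
  have lt_dim : (\dim <<s>> < \dim <<v :: s>>)%N.
    rewrite (ltn_leqif (dimv_leqif_sup _)) ?span_cons ?addvSr //.
    by apply: contra s'v => /subvP; apply; rewrite -span_cons memv_span ?mem_head.
  have le_dim := dimvS (subvf <<v :: s>>%VS).
  lia.
Qed.

Section NumberField.

Variables (Qn : splittingFieldType rat) (QnC : {rmorphism Qn -> algC}).
Variables (n : nat) (w : Qn) (z : algC).
Hypotheses (prim_w : n.-primitive_root w) (genQn : <<1; w>>%VS = fullv).
Hypothesis prim_z : n.-primitive_root z.

Lemma QnC_rat c : QnC c%:A = ratr c.
Proof. exact: (fmorph_eq_rat (QnC \o in_alg Qn)). Qed.

Lemma in_Qz_QnC x : in_Qz z x <-> exists a, x = QnC a.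
Proof.
have prim_Cw : n.-primitive_root (QnC w) by rewrite fmorph_primitive_root.
have ratr_QnC (q : {poly rat}) : map_poly ratr q = map_poly (QnC \o in_alg Qn) q.
  by apply: eq_map_poly => c /=; rewrite QnC_rat.
split=> [[p ->] | [a ->]].
  have [k ->] := prim_rootP prim_Cw (prim_expr_order prim_z).
  exists (map_poly (in_alg Qn) p).[w ^+ k].
  by rewrite -horner_map rmorphXn -map_poly_comp -ratr_QnC.
have [q Dq] := polyOver1P (Fadjoin_polyOver 1 w a).
have a_gen : a \in <<1; w>>%VS by rewrite genQn memvf.
rewrite -(Fadjoin_poly_eq a_gen) Dq -horner_map -map_poly_comp -ratr_QnC.
have [k ->] := prim_rootP prim_z (prim_expr_order prim_Cw).
exact/in_Qz_horner/in_Qz_zX.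
Qed.

Lemma in_QzV x : in_Qz z x -> in_Qz z x^-1.
Proof. by case/in_Qz_QnC=> a ->; apply/in_Qz_QnC; exists a^-1; rewrite fmorphV. Qed.

Lemma Qz_aut_gal (sg : gal_of {:Qn}) (nu : {rmorphism algC -> algC}) :
  {morph QnC : a / sg a >-> nu a} -> Qz_aut z nu.
Proof.
move=> nuE; split=> [_ /in_Qz_QnC[a ->] | _ /in_Qz_QnC[b ->] | x y _ _ | x y _ _ |].
- by apply/in_Qz_QnC; exists (sg a); rewrite nuE.
- exists (QnC ((sg^-1)%g b)); first by apply/in_Qz_QnC; exists ((sg^-1)%g b).
  by rewrite -nuE -galM ?memvf // mulVg gal_id.
- exact: rmorphD.
- exact: rmorphM.
- exact: rmorph1.
Qed.

Section GaloisGroup.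

Variable K : algC -> Prop.
Hypothesis subK : is_subfield K.

Lemma in_Gal_eq1 s x : in_Gal z K s -> in_Qz z x -> s x = 1 -> x = 1.
Proof.
case=> [[_ _ sD sM s1] sK] Qx sx1; apply/eqP; apply: contraT => x_neq1.
have Qm1 : in_Qz z (-1) by rewrite -(rmorphN1 ratr); apply: in_Qz_rat.
have Qx1 := in_QzD Qx Qm1.
have sx1_0 : s (x - 1) = 0.
  by rewrite (sD _ _ Qx Qm1) sx1 (sK _ (subfieldN subK (subfield1 subK))) subrr.
have := sM _ _ Qx1 (in_QzV Qx1).
by rewrite sx1_0 mul0r mulfV ?subr_eq0 // s1 => /eqP; rewrite oner_eq0.
Qed.

Lemma in_Gal_prim_rootX s : in_Gal z K s -> exists2 k, coprime k n & s z = z ^+ k.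
Proof.
move=> sGal; have n_gt0 := prim_order_gt0 prim_z.
have sX m : s (z ^+ m) = s z ^+ m.
  by have := in_Gal_horner subK 'X^m sGal; rewrite map_polyXn !hornerXn.
have szn1 : s z ^+ n = 1.
  by case: sGal => [[_ _ _ _ s1] _]; rewrite -sX (prim_expr_order prim_z).
have [k sz] := prim_rootP prim_z szn1; exists k => //.
have [m prim_sz m_dvd_n] := prim_order_exists n_gt0 szn1.
have n_dvd_m : (n %| m)%N.
  rewrite (prim_order_dvd prim_z); apply/eqP/(in_Gal_eq1 sGal (in_Qz_zX z m)).
  by rewrite sX prim_expr_order.
have m_eq_n : m = n by apply/eqP; rewrite eqn_dvd m_dvd_n n_dvd_m.
by rewrite -(prim_root_exp_coprime _ prim_z) -sz -m_eq_n.
Qed.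

Lemma subfield_preimage : exists E : {subfield Qn}, forall a, a \in E <-> K (QnC a).
Proof.
have [s sK spanK] := exists_span_pred (fun a : Qn => K (QnC a)).
have memE a : a \in <<s>>%VS <-> K (QnC a).
  split=> [sa | /spanK//]; rewrite (coord_span (X := in_tuple s) sa) rmorph_sum.
  apply: subfield_sum => // i _; rewrite -mulr_algl rmorphM QnC_rat.
  by apply: subfieldM (subfield_rat subK _) (sK _ _); rewrite ?mem_nth ?size_tuple.
have E_alg : is_aspace <<s>>.
  rewrite /is_aspace has_algid1; last by apply/memE; rewrite rmorph1; apply: subfield1.
  by apply/prodvP => a b /memE Ka /memE Kb; apply/memE; rewrite rmorphM; apply: subfieldM.
by exists (ASpace E_alg).
Qed.

Hypothesis galQn : galois 1 {:Qn}.
Hypothesis QnC_ext : forall sg : gal_of {:Qn},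
  {nu : {rmorphism algC -> algC} | {morph QnC : a / sg a >-> nu a}}.
Hypothesis KQz : forall x, K x -> in_Qz z x.

Lemma in_K_of_Gal_fixed x : in_Qz z x -> (forall s, in_Gal z K s -> s x = x) -> K x.
Proof.
have [E memE] := subfield_preimage.
have /galois_fixedField fixE : galois E {:Qn}.
  by apply: galoisS galQn; rewrite sub1v subvf.
case/in_Qz_QnC=> a -> fixa; apply/memE; rewrite -fixE.
apply/fixedFieldP => [|sg]; first exact: memvf.
rewrite (gal_kHom _ (subvf E)) => /kHomP_tmp[sgE _].
have [nu nuE] := QnC_ext sg; apply: (fmorph_inj QnC); rewrite nuE.
apply: fixa; split=> [|y Ky]; first exact: Qz_aut_gal nuE.
have [e De] := (in_Qz_QnC y).1 (KQz Ky).
by rewrite De -nuE sgE //; apply/memE; rewrite -De.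
Qed.

End GaloisGroup.

End NumberField.

Section ConvolutionMatrix.

Variable gT : finGroupType.
Local Notation n := #|gT|.
Local Notation chi i := 'chi[[set: gT]]_i.
Implicit Types phi psi : gT -> algC.

Definition conv_mx phi : 'M[algC]_n :=
  \matrix_(i, j) phi (enum_val i * (enum_val j)^-1)%g.

Definition conv phi psi (g : gT) : algC := \sum_x phi x * psi (x^-1 * g)%g.

Definition irr_coef phi i : algC := n%:R^-1 * \sum_x phi x * (chi i x)^*.

Definition irr_eig phi i : algC := n%:R * irr_coef phi i / chi i 1%g.

Lemma card_neq0 : n%:R != 0 :> algC.
Proof. by rewrite -cardsT neq0CG. Qed.

Lemma conv_mx_mul phi psi : conv_mx phi *m conv_mx psi = conv_mx (conv phi psi).
Proof.
have sum_enum (F : gT -> algC) : \sum_(k < n) F (enum_val k) = \sum_y F y.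
  by rewrite -(big_enum_val F); apply: eq_bigl.
apply/matrixP => a b; rewrite !mxE /conv; under eq_bigr do rewrite !mxE.
rewrite (sum_enum (fun y => phi (enum_val a * y^-1)%g * psi (y * (enum_val b)^-1)%g)).
rewrite (reindex_inj (inj_comp (mulIg (enum_val a)) (@invg_inj gT))) /=.
by apply: eq_bigr => x _; rewrite invMg invgK mulKVg mulgA.
Qed.

Lemma conv_irr i j g :
  conv (chi i) (chi j) g = (i == j)%:R * (n%:R * chi j g / chi j 1%g).
Proof.
have := generalized_orthogonality_relation g j i.
rewrite cardsT eq_sym => ortho.
rewrite -mulrA mulrCA -ortho mulVKf ?card_neq0 //.
rewrite /conv (reindex_inj (@invg_inj gT)) [RHS]big_mkcond /=.
by apply: eq_bigr => x _; rewrite in_setT invgK mulrC.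
Qed.

Section ClassFunction.

Variable phi : gT -> algC.
Hypothesis phiJ : forall x y, phi (x ^ y)%g = phi x.

Let phi_cf : 'CF([set: gT]).
Proof.
apply: (@Cfun _ _ 0 [ffun x => phi x]); rewrite genGid.
by apply: intro_class_fun => [x y _ _ | x]; rewrite ?phiJ ?in_setT.
Defined.

Lemma cfdot_irr_coef i : '[phi_cf, chi i] = irr_coef phi i.
Proof.
rewrite cfdotE cardsT big_mkcond /=; congr (_ * _).
by apply: eq_bigr => x _; rewrite in_setT cfunE.
Qed.

Lemma irr_expansion x : phi x = \sum_i irr_coef phi i * chi i x.
Proof.
have := congr1 (fun psi : 'CF([set: gT]) => psi x) (cfun_sum_cfdot phi_cf).
rewrite cfunE sum_cfunE => ->.
by apply: eq_bigr => i _; rewrite cfunE cfdot_irr_coef.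
Qed.

(* Expand phi in irreducible characters; orthogonality kills all but one term. *)
Lemma conv_irrl j g : conv phi (chi j) g = irr_eig phi j * chi j g.
Proof.
transitivity (\sum_i irr_coef phi i * conv (chi i) (chi j) g).
  rewrite /conv; under eq_bigr => x _ do rewrite irr_expansion mulr_suml.
  rewrite exchange_big; apply: eq_bigr => i _; rewrite mulr_sumr.
  by apply: eq_bigr => x _; rewrite mulrA.
rewrite (bigD1 j) //= big1 => [|i /negbTE]; last by rewrite conv_irr => ->; rewrite !mul0r mulr0.
by rewrite conv_irr eqxx mul1r addr0 /irr_eig; ring.
Qed.

Lemma conv_irrr j g : conv (chi j) phi g = irr_eig phi j * chi j g.
Proof.
transitivity (\sum_i irr_coef phi i * conv (chi j) (chi i) g).
  rewrite /conv; under eq_bigr => x _ do rewrite (irr_expansion (x^-1 * g)%g) mulr_sumr.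
  rewrite exchange_big; apply: eq_bigr => i _; rewrite mulr_sumr.
  by apply: eq_bigr => x _; rewrite mulrCA.
rewrite (bigD1 j) //= big1 => [|i]; last by rewrite conv_irr eq_sym => /negbTE->; rewrite !mul0r mulr0.
by rewrite conv_irr eqxx mul1r addr0 /irr_eig; ring.
Qed.

Lemma conv_mx_irrl j : conv_mx phi *m conv_mx (chi j) = irr_eig phi j *: conv_mx (chi j).
Proof. by rewrite conv_mx_mul; apply/matrixP => a b; rewrite !mxE conv_irrl. Qed.

Lemma conv_mx_irrr j : conv_mx (chi j) *m conv_mx phi = irr_eig phi j *: conv_mx (chi j).
Proof. by rewrite conv_mx_mul; apply/matrixP => a b; rewrite !mxE conv_irrr. Qed.

End ClassFunction.

Lemma sum_irr1_conv_mx : \sum_j chi j 1%g *: conv_mx (chi j) = n%:R *: 1%:M.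
Proof.
apply/matrixP => a b; rewrite summxE; under eq_bigr do rewrite !mxE.
have := congr1 (fun psi : 'CF([set: gT]) => psi (enum_val a * (enum_val b)^-1)%g)
  (cfReg_sum [set: gT]%G).
rewrite sum_cfunE cfRegE cardsT -eq_mulgV1 (inj_eq enum_val_inj) => reg_ab.
by rewrite !mxE mulr_natr reg_ab; apply: eq_bigr => i _; rewrite cfunE.
Qed.

Lemma eigenvalue_conv_mx phi a : (forall x y, phi (x ^ y)%g = phi x) ->
  eigenvalue (conv_mx phi) a <-> exists j, a = irr_eig phi j.
Proof.
move=> phiJ; split=> [/eigenvalueP[v va v_neq0] | [j ->]]; last first.
  apply/eigenvalueP; exists (row (enum_rank 1%g) (conv_mx (chi j))).
    by rewrite -row_mul conv_mx_irrr //; apply/rowP => k; rewrite !mxE.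
  apply: contraTneq (irr1_neq0 j) => /rowP/(_ (enum_rank 1%g)).
  by rewrite !mxE enum_rankK mulgV => ->; rewrite eqxx.
have [/existsP[j vj_neq0] | /existsPn vj0] := boolP [exists j, v *m conv_mx (chi j) != 0].
  exists j; apply/eqP; rewrite -subr_eq0; apply: contraNT vj_neq0 => a_neq.
  have : (a - irr_eig phi j) *: (v *m conv_mx (chi j)) = 0.
    by rewrite scalerBl scalemxAl -va -mulmxA conv_mx_irrl // -scalemxAr subrr.
  by move/eqP; rewrite scaler_eq0 (negbTE a_neq).
(* The irreducible characters sum to the regular character, so v would vanish. *)
have : n%:R *: v = 0.
  rewrite -[v in LHS]mulmx1 scalemxAr -sum_irr1_conv_mx mulmx_sumr big1 // => j _.
  by rewrite -scalemxAr (eqP (negPn (vj0 j))) scaler0.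
by move/eqP; rewrite scaler_eq0 (negbTE card_neq0) (negbTE v_neq0).
Qed.

Lemma irr_eig_inj phi psi :
    (forall x y, phi (x ^ y)%g = phi x) -> (forall x y, psi (x ^ y)%g = psi x) ->
  (forall j, irr_eig phi j = irr_eig psi j) -> phi =1 psi.
Proof.
move=> phiJ psiJ eq_eig x; rewrite (irr_expansion phiJ) (irr_expansion psiJ).
apply: eq_bigr => i _; congr (_ * _).
by apply: (mulfI card_neq0); apply: (mulIf (invr_neq0 (irr1_neq0 i))); apply: eq_eig.
Qed.

End ConvolutionMatrix.

Lemma irr_eig_in_Qz z (gT : finGroupType) (phi : gT -> algC) j :
    (forall x, in_Qz z x -> in_Qz z x^-1) ->
    (forall x, in_Qz z (phi x)) -> (forall i x, in_Qz z ('chi[[set: gT]]_i x)) ->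
  in_Qz z (irr_eig phi j).
Proof.
move=> QzV Qz_phi Qz_irr.
have Qz_n : in_Qz z #|gT|%:R by rewrite -ratr_nat; apply: in_Qz_rat.
apply: in_QzM (QzV _ (Qz_irr j 1%g)); apply: in_QzM Qz_n (in_QzM (QzV _ Qz_n) _).
by apply: in_Qz_sum => x _; rewrite -irr_inv; apply: in_QzM.
Qed.

Section GaloisAction.

Variable gT : finGroupType.
Local Notation n := #|gT|.
Local Notation chi i := 'chi[[set: gT]]_i.
Variables (u : {rmorphism algC -> algC}) (h : nat).
Hypothesis uX : forall y, y ^+ n = 1 -> u y = y ^+ h.

(* chi_i x is the trace of a diagonalisable matrix whose eigenvalues are n-th
   roots of unity. *)
Lemma irr_aut i (x : gT) : u (chi i x) = chi i (x ^+ h)%g.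
Proof.
rewrite -irrRepr; set rG := 'Chi_i.
have [e [[B uB DrG] [e1 _] [chix _] _]] := repr_rsim_diag rG (in_setT x).
have rGX k : rG (x ^+ k)%g = invmx B *m diag_mx (\row_j e 0 j ^+ k) *m B.
  elim: k => [|k IHk].
    rewrite expg0 repr_mx1 (_ : \row_j _ = const_mx 1); last first.
      by apply/rowP => j; rewrite !mxE expr0.
    by rewrite diag_const_mx mulmx1 mulVmx.
  rewrite expgS repr_mxM ?in_setT // IHk DrG !mulmxA -[_ *m B *m invmx B]mulmxA.
  rewrite mulmxV // mulmx1 -(mulmxA (invmx B) (diag_mx e)) mulmx_diag.
  by congr (_ *m diag_mx _ *m _); apply/rowP => j; rewrite !mxE exprS.
rewrite chix cfunE in_setT mulr1n rGX mxtrace_mulC mulmxA mulmxV // mul1mx.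
rewrite mxtrace_diag rmorph_sum; apply: eq_bigr => j _; rewrite mxE; apply: uX.
have /dvdnP[q ->] : (#[x]%g %| n)%N by rewrite -cardsT; apply: order_dvdG; rewrite in_setT.
by rewrite mulnC exprM e1 expr1n.
Qed.

Hypothesis coprime_hn : coprime h n.
Local Notation h' := (expg_invn [set: gT] h).

Lemma expg_coprimeK : cancel (fun x : gT => x ^+ h)%g (fun x => x ^+ h')%g.
Proof. by move=> x; apply: expgK; rewrite ?cardsT 1?coprime_sym ?in_setT. Qed.

Variable phi : gT -> algC.
Hypothesis phi_u : forall x, u (phi x) = phi x.

Lemma irr_eig_aut j : u (irr_eig phi j) = irr_eig (fun x => phi (x ^+ h')%g) j.
Proof.
rewrite /irr_eig /irr_coef !rmorphM !fmorphV !rmorph_nat rmorph_sum irr_aut expg1n.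
congr (_ * (_ * _) * _); rewrite [RHS](reindex_inj (can_inj expg_coprimeK)) /=.
by apply: eq_bigr => x _; rewrite rmorphM phi_u expg_coprimeK -!irr_inv irr_aut expVgn.
Qed.

Hypothesis phiJ : forall x y, phi (x ^ y)%g = phi x.

Lemma irr_eig_aut_fixed :
  (forall j, u (irr_eig phi j) = irr_eig phi j) <-> (forall g, phi (g ^+ h)%g = phi g).
Proof.
have phi'J x y : phi ((x ^ y) ^+ h')%g = phi (x ^+ h')%g by rewrite -conjXg phiJ.
split=> [eig_u g | phiX j].
  have phi'E := irr_eig_inj phi'J phiJ (fun j => etrans (esym (irr_eig_aut j)) (eig_u j)).
  by rewrite -phi'E expg_coprimeK.
have phi'E x : phi (x ^+ h')%g = phi x.
  by rewrite -phiX -expgM mulnC expgM expg_coprimeK.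
rewrite irr_eig_aut /irr_eig /irr_coef; congr (_ * (_ * _) / _).
by apply: eq_bigr => x _; rewrite phi'E.
Qed.

End GaloisAction.

Theorem mainTheorem4 (gT : finGroupType) (f : gT -> rat) (z : algC)
  (K : algC -> Prop)
  (hz : #|gT|.-primitive_root z)
  (hclass : forall x y : gT, f (x ^ y)%g = f x)
  (hinv : forall x : gT, f (x^-1)%g = f x)
  (hK : is_subfield K)
  (hKQz : forall x, K x -> in_Qz z x) :
  (forall a : algC, eigenvalue (cayley_adj f) a -> K a) <->
  (forall h : nat, in_HK #|gT| z K h -> forall g : gT, f (g ^+ h)%g = f g).
Proof.
have [Qn galQn [QnC QnC_ext [w [prim_w genQn] QnC_char]]] :=
  group_num_field_exists [set: gT]%G.
rewrite cardsT in prim_w.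
pose phi x : algC := ratr (f x).
have phiJ x y : phi (x ^ y)%g = phi x by rewrite /phi hclass.
have phi_u (u : {rmorphism algC -> algC}) x : u (phi x) = phi x := fmorph_rat u (f x).
have phiXE h : (forall g, phi (g ^+ h)%g = phi g) <-> (forall g, f (g ^+ h)%g = f g).
  split=> fX g; last by rewrite /phi fX.
  by apply: (fmorph_inj (ratr : {rmorphism rat -> algC})); apply: fX.
have QzV := in_QzV QnC prim_w genQn hz.
have Qz_irr i x : in_Qz z ('chi[[set: gT]]_i x).
  have [b <-] := QnC_char _ _ _ (irr_char i) x (order_dvdG (in_setT x)).
  by apply/(in_Qz_QnC QnC prim_w genQn hz); exists b.
have Qz_eig j := irr_eig_in_Qz j QzV (fun x => in_Qz_rat z (f x)) Qz_irr.
rewrite (_ : cayley_adj f = conv_mx phi) //.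
split=> [eigK h [co_hn [s [sGal sz]]] | fX a /eigenvalue_conv_mx[// | j ->]].
  have [u uX] := Qn_aut_exists co_hn.
  apply/phiXE/(irr_eig_aut_fixed uX co_hn (phi_u u) phiJ) => j.
  rewrite -(in_Gal_eq_aut hK uX (prim_expr_order hz) sGal sz (Qz_eig j)).
  by case: sGal => _; apply; apply: eigK; apply/eigenvalue_conv_mx => //; exists j.
apply: (in_K_of_Gal_fixed prim_w genQn hz hK galQn QnC_ext hKQz (Qz_eig j)) => s sGal.
have [h co_hn sz] := in_Gal_prim_rootX QnC prim_w genQn hz hK sGal.
have [u uX] := Qn_aut_exists co_hn.
rewrite (in_Gal_eq_aut hK uX (prim_expr_order hz) sGal sz (Qz_eig j)).
apply: (irr_eig_aut_fixed uX co_hn (phi_u u) phiJ).2.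
by apply/phiXE/fX; split=> //; exists s.
Qed.
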